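(* Let $A,B$ be idempotent $\Gamma$-graded rings and ${}_AP_B$, ${}_BQ_A$ graded bimodules unital on both sides, such that there is a graded Morita context $(A,B,P,Q,\mu,\nu)$ with surjective trace maps. Let ${}_AK$ and ${}_BL$ be unital torsion-free graded modules. Then: (1) The map $\varphi:P\otimes_B B\cdot\mathrm{HOM}_A(P,K)\to A\cdot\mathrm{HOM}_A(A,K)$ given by $\varphi(p\otimes f)(x)=f(xp)=xf(p)$ ($p\in P$, $f\in B\cdot\mathrm{HOM}_A(P,K)$, $x\in A$) is a graded epimorphism of degree $e$ of graded left $A$-modules with torsion kernel. (2) The map $\gamma:B\otimes_BL\to B\cdot\mathrm{HOM}_A(P,P\otimes_BL)$ given by $\gamma(b\otimes l)(p)=pb\otimes l$ is a graded epimorphism of degree $e$ of graded left $B$-modules with torsion kernel.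
   Context: $\Gamma$ is a fixed multiplicative group with identity $e$. Rings are associative $\Gamma$-graded, not necessarily unital; $A$ is idempotent if $A^2=A$. A graded left module is unital if $AM=M$, torsion-free if $Am=0\Rightarrow m=0$; a module has torsion kernel if every element $k$ of the kernel satisfies $Ak=0$ (for $B$-modules: $Bk=0$). A left-linear $f$ is graded of degree $\sigma$ if $f(M_\tau)\subseteq N_{\tau\sigma}$; $\mathrm{HOM}$ is the direct sum over degrees. For ${}_RM_S$ and a graded left $R$-module $N$, $\mathrm{HOM}_R(M,N)$ is a graded left $S$-module via $(sf)(m)=f(ms)$; $S\cdot H$ denotes finite sums $\sum s_ih_i$. (In particular $\mathrm{HOM}_A(A,K)$ is a left $A$-module via $(af)(x)=f(xa)$.) A graded Morita context $(A,B,P,Q,\mu,\nu)$: idempotent graded rings $A,B$, graded bimodules ${}_AP_B$, ${}_BQ_A$ unital on both sides, degree-$e$ graded bimodule maps $\mu:P\otimes_BQ\to A$, $\langle p,q\rangle=\mu(p\otimes q)$, $\nu:Q\otimes_AP\to B$, $[q,p]=\nu(q\otimes p)$, with $p'[q,p]=\langle p',q\rangle p$ and $q'\langle p,q\rangle=[q',p]q$. *)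

From HB Require Import structures.
From mathcomp Require Import all_boot all_algebra.
From Stdlib Require List.

Set Implicit Arguments.
Unset Strict Implicit.

Import GRing.Theory.
Local Open Scope ring_scope.

Record grp := Grp {
  gcar :> Type;
  gmul : gcar -> gcar -> gcar;
  gone : gcar;
  ginv : gcar -> gcar;
  gmulA : forall x y z, gmul x (gmul y z) = gmul (gmul x y) z;
  gmul1 : forall x, gmul gone x = x;
  gmulV : forall x, gmul (ginv x) x = gone
}.

(* A Gamma-grading of an abelian group M: a family of additive subgroups
   D g (the homogeneous elements of degree g) such that M = (+)_g D g
   (internal direct sum).                                               *)
Definition is_grading (G : grp) (M : zmodType) (D : G -> M -> Prop) : Prop :=
  (forall g, D g 0 /\ (forall x y, D g x -> D g y -> D g (x - y))) /\
  (forall m : M, exists s : seq (G * M)%type,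
      (forall x, List.In x s -> D x.1 x.2) /\ m = \sum_(x <- s) x.2) /\
  (forall s : seq (G * M)%type,
      (forall x, List.In x s -> D x.1 x.2) ->
      List.NoDup (map fst s) ->
      \sum_(x <- s) x.2 = 0 ->
      forall x, List.In x s -> x.2 = 0).

Definition additive_fun (M N : zmodType) (f : M -> N) : Prop :=
  forall x y, f (x - y) = f x - f y.

Definition graded_ring (G : grp) (A : zmodType) (mul : A -> A -> A)
    (DA : G -> A -> Prop) : Prop :=
  is_grading DA /\
  (forall a b c, mul a (mul b c) = mul (mul a b) c) /\
  (forall a b c, mul a (b + c) = mul a b + mul a c) /\
  (forall a b c, mul (a + b) c = mul a c + mul b c) /\
  (forall s t a b, DA s a -> DA t b -> DA (gmul s t) (mul a b)).

Definition idempotent_ring (A : zmodType) (mul : A -> A -> A) : Prop :=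
  forall a : A, exists s : seq (A * A)%type, a = \sum_(x <- s) mul x.1 x.2.

Definition graded_lmod (G : grp) (A : zmodType) (mul : A -> A -> A)
    (DA : G -> A -> Prop) (M : zmodType) (act : A -> M -> M)
    (DM : G -> M -> Prop) : Prop :=
  is_grading DM /\
  (forall a m n, act a (m + n) = act a m + act a n) /\
  (forall a b m, act (a + b) m = act a m + act b m) /\
  (forall a b m, act (mul a b) m = act a (act b m)) /\
  (forall s t a m, DA s a -> DM t m -> DM (gmul s t) (act a m)).

Definition graded_rmod (G : grp) (B : zmodType) (mul : B -> B -> B)
    (DB : G -> B -> Prop) (M : zmodType) (act : M -> B -> M)
    (DM : G -> M -> Prop) : Prop :=
  is_grading DM /\
  (forall b m n, act (m + n) b = act m b + act n b) /\
  (forall a b m, act m (a + b) = act m a + act m b) /\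
  (forall a b m, act m (mul a b) = act (act m a) b) /\
  (forall s t m b, DM s m -> DB t b -> DM (gmul s t) (act m b)).

Definition unital_lmod (A M : zmodType) (act : A -> M -> M) : Prop :=
  forall m : M, exists s : seq (A * M)%type, m = \sum_(x <- s) act x.1 x.2.

Definition unital_rmod (B M : zmodType) (act : M -> B -> M) : Prop :=
  forall m : M, exists s : seq (M * B)%type, m = \sum_(x <- s) act x.1 x.2.

Definition torsion_free (A M : zmodType) (act : A -> M -> M) : Prop :=
  forall m : M, (forall a, act a m = 0) -> m = 0.

Definition graded_bimod (G : grp)
    (A : zmodType) (mulA : A -> A -> A) (DA : G -> A -> Prop)
    (B : zmodType) (mulB : B -> B -> B) (DB : G -> B -> Prop)
    (P : zmodType) (l : A -> P -> P) (r : P -> B -> P) (DP : G -> P -> Prop)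
    : Prop :=
  graded_lmod mulA DA l DP /\ graded_rmod mulB DB r DP /\
  (forall a p b, r (l a p) b = l a (r p b)) /\
  unital_lmod l /\ unital_rmod r.

(* Tensor products P (x)_B M (P a right B-module, M a left B-module),
   given by the universal property of B-balanced biadditive maps.       *)
Definition biadditive (P M Z : zmodType) (beta : P -> M -> Z) : Prop :=
  (forall p1 p2 m, beta (p1 + p2) m = beta p1 m + beta p2 m) /\
  (forall p m1 m2, beta p (m1 + m2) = beta p m1 + beta p m2).

Definition balanced (B P M Z : zmodType) (r : P -> B -> P) (l : B -> M -> M)
    (beta : P -> M -> Z) : Prop :=
  forall p b m, beta (r p b) m = beta p (l b m).

Definition is_tensor (B P M : zmodType) (r : P -> B -> P) (l : B -> M -> M)
    (T : zmodType) (tens : P -> M -> T) : Prop :=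
  biadditive tens /\ balanced r l tens /\
  forall (Z : zmodType) (beta : P -> M -> Z),
    biadditive beta -> balanced r l beta ->
    exists h : T -> Z, additive_fun h /\
      (forall p m, h (tens p m) = beta p m) /\
      (forall h' : T -> Z, additive_fun h' ->
         (forall p m, h' (tens p m) = beta p m) -> forall t, h' t = h t).

(* Graded Morita context (A,B,P,Q,mu,nu); mu and nu are given as the
   B-balanced (resp. A-balanced) biadditive maps <p,q> and [q,p], i.e. as
   maps on P (x)_B Q and Q (x)_A P.                                      *)
Definition graded_morita_context (G : grp)
    (A : zmodType) (mulA : A -> A -> A) (DA : G -> A -> Prop)
    (B : zmodType) (mulB : B -> B -> B) (DB : G -> B -> Prop)
    (P : zmodType) (lP : A -> P -> P) (rP : P -> B -> P) (DP : G -> P -> Prop)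
    (Q : zmodType) (lQ : B -> Q -> Q) (rQ : Q -> A -> Q) (DQ : G -> Q -> Prop)
    (mu : P -> Q -> A) (nu : Q -> P -> B) : Prop :=
  biadditive mu /\ balanced rP lQ mu /\
  (forall a p q, mu (lP a p) q = mulA a (mu p q)) /\
  (forall p q a, mu p (rQ q a) = mulA (mu p q) a) /\
  (forall s t p q, DP s p -> DQ t q -> DA (gmul s t) (mu p q)) /\
  biadditive nu /\ balanced rQ lP nu /\
  (forall b q p, nu (lQ b q) p = mulB b (nu q p)) /\
  (forall q p b, nu q (rP p b) = mulB (nu q p) b) /\
  (forall s t q p, DQ s q -> DP t p -> DB (gmul s t) (nu q p)) /\
  (forall p' q p, rP p' (nu q p) = lP (mu p' q) p) /\
  (forall q' p q, rQ q' (mu p q) = lQ (nu q' p) q).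

Definition surjective_traces (A B P Q : zmodType)
    (mu : P -> Q -> A) (nu : Q -> P -> B) : Prop :=
  (forall a : A, exists s : seq (P * Q)%type, a = \sum_(x <- s) mu x.1 x.2) /\
  (forall b : B, exists s : seq (Q * P)%type, b = \sum_(x <- s) nu x.1 x.2).

Definition graded_hom (G : grp) (A M N : zmodType)
    (lM : A -> M -> M) (DM : G -> M -> Prop)
    (lN : A -> N -> N) (DN : G -> N -> Prop) (sigma : G) (f : M -> N) : Prop :=
  additive_fun f /\
  (forall a m, f (lM a m) = lN a (f m)) /\
  (forall tau m, DM tau m -> DN (gmul tau sigma) (f m)).

(* HOM_A(M,N) = direct sum over the degrees: finite sums of graded maps. *)
Definition HOM (G : grp) (A M N : zmodType)
    (lM : A -> M -> M) (DM : G -> M -> Prop)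
    (lN : A -> N -> N) (DN : G -> N -> Prop) (f : M -> N) : Prop :=
  exists s : seq (G * (M -> N))%type,
    (forall x, List.In x s -> graded_hom lM DM lN DN x.1 x.2) /\
    (forall m, f m = \sum_(x <- s) x.2 m).

(* For M a right S-module, S . HOM_A(M,N) = finite sums sum_i s_i h_i with
   h_i in HOM_A(M,N), where (s h)(m) = h(m s).                           *)
Definition SHOM (G : grp) (A S M N : zmodType)
    (lM : A -> M -> M) (rM : M -> S -> M) (DM : G -> M -> Prop)
    (lN : A -> N -> N) (DN : G -> N -> Prop) (f : M -> N) : Prop :=
  exists s : seq (S * (M -> N))%type,
    (forall x, List.In x s -> HOM lM DM lN DN x.2) /\
    (forall m, f m = \sum_(x <- s) x.2 (rM m x.1)).

(* φ and γ are defined on pure tensors, φ(p ⊗ f)(x) = f(xp) and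
   γ(b ⊗ l)(p) = pb ⊗ l, through the universal property of the tensor product;
   since homogeneous pure tensors span, both have degree e.
   Surjectivity comes from the surjective traces: an element of S·HOM is a sum
   of maps x ↦ g(xs), and writing s = Σ⟨p,q⟩ (resp. s = Σ[q,p']) the Morita
   identities turn x ↦ g(x⟨p,q⟩) into φ(p ⊗ g(⟨-,q⟩)), and p ↦ g(p[q,p']) into
   p ↦ ⟨p,q⟩g(p'), a value of γ since ⟨p,q⟩(p'' ⊗ l) = p[q,p''] ⊗ l.
   For the kernels, ⟨p,q⟩t = p ⊗ χ(t) where χ(p' ⊗ f) = [q,p']f satisfies
   χ(t)(p') = φ(t)(⟨p',q⟩), and [q,p]t = θ(γ(t)(p)) where
   θ(p' ⊗ l) = [q,p'] ⊗ l. *)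

From HB Require Import structures.
From mathcomp Require Import all_boot all_algebra.
From Stdlib Require Import ClassicalEpsilon.

Set Implicit Arguments.
Unset Strict Implicit.
Unset Printing Implicit Defensive.

Import GRing.Theory.
Local Open Scope ring_scope.

Definition asbool (P : Prop) : bool :=
  if excluded_middle_informative P then true else false.

Lemma asboolP (P : Prop) : reflect P (asbool P).
Proof. by rewrite /asbool; case: excluded_middle_informative => h; constructor. Qed.

(* Classical decidable equality on Gamma, used to collect summands by degree. *)
HB.instance Definition _ (G : grp) :=
  hasDecEq.Build (gcar G) (fun x y : G => asboolP (x = y)).

Section AdditiveFun.
Variables (M N : zmodType).
Implicit Type f : M -> N.

Lemma morphD0 f : {morph f : x y / x + y} -> f 0 = 0.
Proof. by move=> fD; apply: (addrI (f 0)); rewrite -fD !addr0. Qed.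

Lemma morphDN f : {morph f : x y / x + y} -> {morph f : x / - x}.
Proof. by move=> fD x; apply: (addrI (f x)); rewrite -fD !subrr morphD0. Qed.

Lemma morphD_additive f : {morph f : x y / x + y} -> additive_fun f.
Proof. by move=> fD x y; rewrite fD morphDN. Qed.

Lemma additive_morphD f : additive_fun f -> {morph f : x y / x + y}.
Proof.
move=> fB x y; have f0 : f 0 = 0 by rewrite -(subrr 0) fB subrr.
have fN z : f (- z) = - f z by rewrite -sub0r fB f0 sub0r.
by rewrite -[y]opprK fB !fN opprK.
Qed.

Lemma morphD_sum f : {morph f : x y / x + y} ->
  forall (I : Type) (s : seq I) (P : pred I) (F : I -> M),
  f (\sum_(i <- s | P i) F i) = \sum_(i <- s | P i) f (F i).
Proof. by move=> fD I s P F; rewrite (big_morph f fD (morphD0 fD)). Qed.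

End AdditiveFun.

Section SumsOverLists.
Variables (M : zmodType) (J : Type).

Lemma big_ind_In (K : M -> Prop) (s : seq J) (P : pred J) (F : J -> M) :
  K 0 -> (forall a b, K a -> K b -> K (a + b)) ->
  (forall j, List.In j s -> P j -> K (F j)) -> K (\sum_(j <- s | P j) F j).
Proof.
move=> K0 KD; elim: s => [|j s IH] KF; first by rewrite big_nil.
rewrite big_cons; have KFs := IH (fun i si => KF i (or_intror si)).
by case: ifP => // Pj; apply: KD => //; apply: KF => //; left.
Qed.

Lemma eq_big_In (s : seq J) (F F' : J -> M) :
  (forall j, List.In j s -> F j = F' j) -> \sum_(j <- s) F j = \sum_(j <- s) F' j.
Proof.
elim: s => [|j s IH] FF'; first by rewrite !big_nil.
by rewrite !big_cons FF'; [rewrite IH // => i si; apply: FF'; right | left].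
Qed.

End SumsOverLists.

Lemma InP (T : eqType) (x : T) (s : seq T) : reflect (List.In x s) (x \in s).
Proof.
elim: s => [|y s IH]; first by constructor.
by rewrite inE eq_sym; apply: (iffP orP) => -[/eqP|/IH]; [left | right | left | right].
Qed.

Lemma uniq_NoDup (T : eqType) (s : seq T) : uniq s -> List.NoDup s.
Proof.
elim: s => [|x s IH] /=; first by constructor.
by case/andP=> xNs us; constructor; [move/InP; apply/negP | exact: IH].
Qed.

Section FinSums.
Variables (I X : Type) (Z : zmodType) (R : I -> Prop) (ev : I -> X -> Z).

Definition fin_sum_of (f : X -> Z) : Prop :=
  exists l : seq I, (forall y, List.In y l -> R y) /\
    forall x, f x = \sum_(y <- l) ev y x.

Lemma fin_sum_of1 y (f : X -> Z) : R y -> (forall x, f x = ev y x) -> fin_sum_of f.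
Proof.
by move=> Ry fE; exists [:: y]; split=> [_ [<-|[]] //|x]; rewrite big_seq1.
Qed.

Lemma fin_sum_of_sum (J : Type) (s : seq J) (F : J -> X -> Z) (f : X -> Z) :
  (forall j, List.In j s -> fin_sum_of (F j)) ->
  (forall x, f x = \sum_(j <- s) F j x) -> fin_sum_of f.
Proof.
elim: s f => [|j s IH] f Fs fE.
  by exists [::]; split=> // x; rewrite fE !big_nil.
have [l1 [Rl1 E1]] := Fs j (or_introl erefl).
have [l2 [Rl2 E2]] := IH _ (fun i si => Fs i (or_intror si)) (fun x => erefl).
exists (l1 ++ l2); split=> [y /(List.in_app_or l1 l2 y) [/Rl1|/Rl2] //|x].
by rewrite fE big_cons E1 E2 big_cat.
Qed.

End FinSums.

Lemma fin_sum_of_image (T : zmodType) (X : Type) (Z : zmodType)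
    (R : T -> Prop) (phi : T -> X -> Z) (f : X -> Z) :
  (forall x, {morph phi^~ x : t u / t + u}) ->
  fin_sum_of R phi f -> exists t, forall x, phi t x = f x.
Proof.
by move=> phiD [l [_ fE]]; exists (\sum_(t <- l) t) => x; rewrite fE (morphD_sum (phiD x)).
Qed.

Section Gradings.
Variables (G : grp) (M : zmodType) (D : G -> M -> Prop).

Definition homog_decomposable : Prop :=
  forall m : M, exists s : seq (G * M),
    (forall x, List.In x s -> D x.1 x.2) /\ m = \sum_(x <- s) x.2.

Hypothesis HD : is_grading D.

Lemma grading_decomposable : homog_decomposable.
Proof. exact: HD.2.1. Qed.

Lemma grading0 g : D g 0.
Proof. by have [] := HD.1 g. Qed.

Lemma gradingN g x : D g x -> D g (- x).
Proof. by move=> Dx; rewrite -sub0r; apply: (HD.1 g).2; first exact: grading0. Qed.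

Lemma gradingD g x y : D g x -> D g y -> D g (x + y).
Proof. by move=> Dx /gradingN Dy; rewrite -[y]opprK; apply: (HD.1 g).2. Qed.

Lemma grading_sum g (J : Type) (s : seq J) (P : pred J) (F : J -> M) :
  (forall j, List.In j s -> P j -> D g (F j)) -> D g (\sum_(j <- s | P j) F j).
Proof. exact: big_ind_In (grading0 g) (@gradingD g). Qed.

Lemma grading_components0 (s : seq (G * M)) :
  (forall x, List.In x s -> D x.1 x.2) -> \sum_(x <- s) x.2 = 0 ->
  forall g, \sum_(x <- s | x.1 == g) x.2 = 0.
Proof.
move=> Ds s0 g.
(* Grouping the summands by degree gives a family with pairwise distinct
   degrees, to which the independence axiom of the grading applies. *)
pose u := undup (map fst s).
pose s' := [seq (g, \sum_(x <- s | x.1 == g) x.2) | g <- u].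
have Ds' y : List.In y s' -> D y.1 y.2.
  case/List.in_map_iff=> h [<- _] /=.
  by apply: grading_sum => x /Ds Dx /eqP <-.
have s'_uniq : List.NoDup (map fst s').
  by rewrite /s' -map_comp map_id; apply/uniq_NoDup/undup_uniq.
have s'_sum : \sum_(y <- s') y.2 = 0.
  rewrite big_map (exchange_big_dep predT) //= -[RHS]s0 big_seq [RHS]big_seq.
  apply: eq_bigr => x sx; rewrite big_mkcond (bigD1_seq x.1) /= ?eqxx ?undup_uniq //.
    by rewrite big1 ?addr0 // => h /negPf; rewrite eq_sym => ->.
  by rewrite mem_undup map_f.
have [gu|gNu] := boolP (g \in u).
  have gs' : List.In (g, \sum_(x <- s | x.1 == g) x.2) s'.
    by apply/List.in_map_iff; exists g; split; last exact/InP.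
  exact: (HD.2.2 s' Ds' s'_uniq s'_sum _ gs').
rewrite big_seq_cond big1 // => x /andP[sx /eqP xg]; case/negP: gNu.
by rewrite mem_undup -xg map_f.
Qed.

Lemma grading_component sigma t (s : seq (G * M)) :
  D sigma t -> (forall x, List.In x s -> D x.1 x.2) -> t = \sum_(x <- s) x.2 ->
  t = \sum_(x <- s | x.1 == sigma) x.2.
Proof.
move=> Dt Ds tE; apply/eqP; rewrite eq_sym -subr_eq0 addrC; apply/eqP.
have := grading_components0 (s := (sigma, - t) :: s) _ _ sigma.
rewrite !big_cons /= eqxx; apply.
  by move=> x [<-|/Ds //]; apply: gradingN.
by rewrite -tE addNr.
Qed.

End Gradings.

Section ZSpan.
Variables (I : Type) (T : zmodType) (g : I -> T).

Definition zspan (t : T) : Prop :=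
  exists s1 s2 : seq I, t = \sum_(i <- s1) g i - \sum_(i <- s2) g i.

Definition zspanb (t : T) : bool := asbool (zspan t).

Lemma zspan_closed : zmod_closed zspanb.
Proof.
split; first by apply/asboolP; exists [::], [::]; rewrite big_nil subrr.
move=> x y /asboolP[s1 [s2 ->]] /asboolP[s3 [s4 ->]]; apply/asboolP.
by exists (s1 ++ s4), (s2 ++ s3); rewrite !big_cat opprB addrACA opprD.
Qed.

End ZSpan.

HB.instance Definition _ (I : Type) (T : zmodType) (g : I -> T) :=
  GRing.isZmodClosed.Build T (zspanb g) (zspan_closed g).

Record zspan_sub (I : Type) (T : zmodType) (g : I -> T) :=
  ZSpanSub { zspan_val :> T; _ : zspanb g zspan_val }.

HB.instance Definition _ (I : Type) (T : zmodType) (g : I -> T) :=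
  [isSub for @zspan_val I T g].
HB.instance Definition _ (I : Type) (T : zmodType) (g : I -> T) :=
  [Choice of zspan_sub g by <:].
HB.instance Definition _ (I : Type) (T : zmodType) (g : I -> T) :=
  [SubChoice_isSubZmodule of zspan_sub g by <:].

Lemma zspan_valD (I : Type) (T : zmodType) (g : I -> T) :
  {morph @zspan_val I T g : x y / x + y}.
Proof. by move=> x y; rewrite -[LHS]/(val (x + y)) raddfD. Qed.

Section Tensor.
Variables (B P M : zmodType) (r : P -> B -> P) (l : B -> M -> M).
Variables (T : zmodType) (tens : P -> M -> T).
Hypothesis Ht : is_tensor r l tens.

Lemma tensDl m : {morph tens^~ m : p1 p2 / p1 + p2}.
Proof. by move=> p1 p2; apply: Ht.1.1. Qed.

Lemma tensDr p : {morph tens p : m1 m2 / m1 + m2}.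
Proof. exact: Ht.1.2. Qed.

Lemma tens_bal p b m : tens (r p b) m = tens p (l b m).
Proof. exact: Ht.2.1. Qed.

Lemma tens0r p : tens p 0 = 0.
Proof. exact: morphD0 (tensDr p). Qed.

Lemma tensNl p m : tens (- p) m = - tens p m.
Proof. exact: (morphDN (tensDl m)). Qed.

Lemma tensor_univ (Z : zmodType) (beta : P -> M -> Z) :
  biadditive beta -> balanced r l beta ->
  exists h : T -> Z, {morph h : x y / x + y} /\ forall p m, h (tens p m) = beta p m.
Proof.
move=> beta_add beta_bal; have [h [hB [htens _]]] := Ht.2.2 Z beta beta_add beta_bal.
by exists h; split; first exact: additive_morphD.
Qed.

Lemma tensor_ext (Z : zmodType) (f g : T -> Z) :
  {morph f : x y / x + y} -> {morph g : x y / x + y} ->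
  (forall p m, f (tens p m) = g (tens p m)) -> f =1 g.
Proof.
move=> fD gD fg.
have beta_add : biadditive (fun p m => f (tens p m)).
  by split=> *; rewrite ?tensDl ?tensDr fD.
have beta_bal : balanced r l (fun p m => f (tens p m)).
  by move=> p b m; rewrite tens_bal.
have [h [_ [_ h_uniq]]] := Ht.2.2 Z _ beta_add beta_bal.
move=> t; rewrite (h_uniq f (morphD_additive fD)) //.
by rewrite (h_uniq g (morphD_additive gD)).
Qed.

Lemma tensor_span t : exists s : seq (P * M), t = \sum_(x <- s) tens x.1 x.2.
Proof.
(* By uniqueness in the universal property, the map into the subgroup generated
   by the pure tensors is a section of the inclusion. *)
pose g (x : P * M) := tens x.1 x.2.
have g_span x : zspanb g (g x).
  by apply/asboolP; exists [:: x], [::]; rewrite big_seq1 big_nil subr0.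
have [h [hD htens]] : exists h : T -> zspan_sub g,
    {morph h : x y / x + y} /\ forall p m, h (tens p m) = ZSpanSub (g_span (p, m)).
  apply: tensor_univ; last by move=> p b m; apply: val_inj; rewrite /= /g /= tens_bal.
  by split=> *; apply: val_inj; rewrite /= /g /= ?tensDl ?tensDr.
have hK : forall t, zspan_val (h t) = t.
  by apply: tensor_ext => [x y|x y|p m]; rewrite ?hD ?htens ?zspan_valD.
case: (h t) (hK t) => v /= /asboolP[s1 [s2 vE]] <-; rewrite vE.
exists (s1 ++ [seq (- x.1, x.2) | x <- s2]).
by rewrite big_cat big_map -sumrN; congr (_ + _); apply: eq_bigr => x _; rewrite tensNl.
Qed.

Lemma tensor_lift_family (X : Type) (Z : zmodType) (beta : X -> P -> M -> Z) :
  (forall x, biadditive (beta x)) -> (forall x, balanced r l (beta x)) ->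
  exists phi : T -> X -> Z, (forall x, {morph phi^~ x : t u / t + u}) /\
    forall p m x, phi (tens p m) x = beta x p m.
Proof.
move=> beta_add beta_bal.
have [phi phiP] := choice (fun x (h : T -> Z) =>
  {morph h : t u / t + u} /\ forall p m, h (tens p m) = beta x p m)
  (fun x => tensor_univ (beta_add x) (beta_bal x)).
by exists (fun t x => phi x t); split=> [x|p m x]; case: (phiP x).
Qed.

Variables (G : grp) (DP : G -> P -> Prop) (DM : G -> M -> Prop) (DT : G -> T -> Prop).
Hypotheses (HDP : homog_decomposable DP) (HDM : homog_decomposable DM).
Hypothesis HDT : is_grading DT.
Hypothesis DT_tens : forall s u p m, DP s p -> DM u m -> DT (gmul s u) (tens p m).

Lemma tensor_graded_image (Z : zmodType) (DZ : G -> Z -> Prop) (F : T -> Z)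
    (shift : G -> G) :
  is_grading DZ -> {morph F : x y / x + y} ->
  (forall s u p m, DP s p -> DM u m -> DZ (shift (gmul s u)) (F (tens p m))) ->
  forall sigma t, DT sigma t -> DZ (shift sigma) (F t).
Proof.
move=> HDZ FD F_tens sigma t Dt.
pose good (t : T) := exists s : seq (G * T),
  (forall y, List.In y s -> DT y.1 y.2 /\ DZ (shift y.1) (F y.2)) /\
  t = \sum_(y <- s) y.2.
have good0 : good 0 by exists [::]; rewrite big_nil.
have goodD a b : good a -> good b -> good (a + b).
  move=> [s1 [Hs1 ->]] [s2 [Hs2 ->]]; exists (s1 ++ s2); rewrite big_cat.
  by split=> // y /(List.in_app_or s1 s2 y) [/Hs1|/Hs2].
have good_all t' : good t'.
  have [s ->] := tensor_span t'; apply: big_ind_In => // x _ _.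
  have [sp [Dsp ->]] := HDP x.1; rewrite (morphD_sum (tensDl _)).
  apply: big_ind_In => // y /Dsp Dy _.
  have [sm [Dsm ->]] := HDM x.2; rewrite (morphD_sum (tensDr _)).
  apply: big_ind_In => // z /Dsm Dz _.
  exists [:: (gmul y.1 z.1, tens y.2 z.2)]; rewrite big_seq1.
  by split=> // w [<-|[]]; split; [apply: DT_tens | apply: F_tens].
have [s [Ds tE]] := good_all t.
rewrite (grading_component HDT Dt (fun y sy => (Ds y sy).1) tE) (morphD_sum FD).
by apply: grading_sum => // y /Ds[_ Dy] /eqP <-.
Qed.

End Tensor.

Section Homs.
Variables (G : grp) (A M N : zmodType).
Variables (lM : A -> M -> M) (DM : G -> M -> Prop) (lN : A -> N -> N) (DN : G -> N -> Prop).
Hypothesis lND : forall a, {morph lN a : x y / x + y}.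

Lemma eq_graded_hom sigma (f g : M -> N) :
  f =1 g -> graded_hom lM DM lN DN sigma f -> graded_hom lM DM lN DN sigma g.
Proof.
move=> fg [fB [f_lin f_deg]]; split=> [x y|]; first by rewrite -!fg.
by split=> [a m|tau m]; rewrite -!fg; [apply: f_lin | apply: f_deg].
Qed.

Lemma HOM_graded sigma (f : M -> N) : graded_hom lM DM lN DN sigma f -> HOM lM DM lN DN f.
Proof. by move=> f_gr; apply: (fin_sum_of1 (y := (sigma, f))). Qed.

Lemma HOM_sum (J : Type) (s : seq J) (F : J -> M -> N) (f : M -> N) :
  (forall j, List.In j s -> HOM lM DM lN DN (F j)) ->
  (forall m, f m = \sum_(j <- s) F j m) -> HOM lM DM lN DN f.
Proof. exact: fin_sum_of_sum. Qed.

Lemma HOM_morphD f : HOM lM DM lN DN f -> {morph f : x y / x + y}.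
Proof.
move=> [l [Hl fE]] x y; rewrite !fE -big_split; apply: eq_big_In => z /Hl[zB _] /=.
exact: additive_morphD.
Qed.

Lemma HOM_lin f : HOM lM DM lN DN f -> forall a m, f (lM a m) = lN a (f m).
Proof.
move=> [l [Hl fE]] a m; rewrite !fE (morphD_sum (lND a)).
by apply: eq_big_In => z /Hl[_ []].
Qed.

Variables (S : zmodType) (rM : M -> S -> M).

Lemma SHOM_of_HOM b (g f : M -> N) :
  HOM lM DM lN DN g -> (forall m, f m = g (rM m b)) -> SHOM lM rM DM lN DN f.
Proof. by move=> g_hom fE; apply: (fin_sum_of1 (y := (b, g))). Qed.

Lemma SHOM_sum (J : Type) (s : seq J) (F : J -> M -> N) (f : M -> N) :
  (forall j, List.In j s -> SHOM lM rM DM lN DN (F j)) ->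
  (forall m, f m = \sum_(j <- s) F j m) -> SHOM lM rM DM lN DN f.
Proof. exact: fin_sum_of_sum. Qed.

Hypothesis rMDl : forall b, {morph rM^~ b : x y / x + y}.

Lemma SHOM_morphD f : SHOM lM rM DM lN DN f -> {morph f : x y / x + y}.
Proof.
move=> [l [Hl fE]] x y; rewrite !fE -big_split; apply: eq_big_In => z /Hl z_hom /=.
by rewrite rMDl (HOM_morphD z_hom).
Qed.

Hypothesis lM_rM : forall a m b, rM (lM a m) b = lM a (rM m b).

Lemma SHOM_lin f : SHOM lM rM DM lN DN f -> forall a m, f (lM a m) = lN a (f m).
Proof.
move=> [l [Hl fE]] a m; rewrite !fE (morphD_sum (lND a)).
by apply: eq_big_In => z /Hl z_hom; rewrite lM_rM (HOM_lin z_hom).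
Qed.

Variable DS : G -> S -> Prop.
Hypothesis HDS : homog_decomposable DS.
Hypothesis rMDr : forall m, {morph rM m : x y / x + y}.
Hypothesis DM_rM : forall s t m b, DM s m -> DS t b -> DM (gmul s t) (rM m b).

Lemma SHOM_graded_decomp f : SHOM lM rM DM lN DN f ->
  fin_sum_of (fun y : G * (M -> N) =>
                graded_hom lM DM lN DN y.1 y.2 /\ SHOM lM rM DM lN DN y.2)
             (fun y m => y.2 m) f.
Proof.
move=> [l [Hl fE]]; apply: (fin_sum_of_sum _ fE) => y /Hl g_hom.
have [sb [Dsb bE]] := HDS y.1; have [lg [Hlg gE]] := g_hom.
apply: (fin_sum_of_sum (s := sb) (F := fun w m => y.2 (rM m w.2))) => [w /Dsb Dw|m].
  apply: (fin_sum_of_sum (s := lg) (F := fun z m => z.2 (rM m w.2))) => [z /Hlg|m].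
    move=> z_gr; have [zB [z_lin z_deg]] := z_gr.
    apply: (fin_sum_of1 (y := (gmul w.1 z.1, fun m => z.2 (rM m w.2)))) => //.
    split; last exact: SHOM_of_HOM (HOM_graded z_gr) _.
    split; first by apply: morphD_additive => u v /=; rewrite rMDl (additive_morphD zB).
    split=> [a m|tau m Dm] /=; first by rewrite lM_rM z_lin.
    by rewrite gmulA; apply: z_deg; apply: DM_rM.
  by rewrite gE.
by rewrite bE (morphD_sum (rMDr m)) (morphD_sum (HOM_morphD g_hom)).
Qed.

End Homs.

Section HomComposition.
Variables (G : grp) (A M1 M2 M3 : zmodType).
Variables (l1 : A -> M1 -> M1) (D1 : G -> M1 -> Prop).
Variables (l2 : A -> M2 -> M2) (D2 : G -> M2 -> Prop).
Variables (l3 : A -> M3 -> M3) (D3 : G -> M3 -> Prop).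

Lemma graded_hom_comp s1 s2 (f : M1 -> M2) (g : M2 -> M3) :
  graded_hom l1 D1 l2 D2 s1 f -> graded_hom l2 D2 l3 D3 s2 g ->
  graded_hom l1 D1 l3 D3 (gmul s1 s2) (g \o f).
Proof.
move=> [fB [f_lin f_deg]] [gB [g_lin g_deg]].
split; first by move=> x y /=; rewrite fB gB.
split=> [a m|tau m Dm] /=; first by rewrite f_lin g_lin.
by rewrite gmulA; apply/g_deg/f_deg.
Qed.

Lemma HOM_comp (f : M1 -> M2) (g : M2 -> M3) :
  HOM l1 D1 l2 D2 f -> HOM l2 D2 l3 D3 g -> HOM l1 D1 l3 D3 (g \o f).
Proof.
move=> [lf [Hlf fE]] [lg [Hlg gE]].
apply: (HOM_sum (s := lg) (F := fun z m => z.2 (f m))) => [z /Hlg z_gr|m]; last exact: gE.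
apply: (HOM_sum (s := lf) (F := fun y m => z.2 (y.2 m))) => [y /Hlf y_gr|m]; last first.
  by rewrite fE (morphD_sum (additive_morphD z_gr.1)).
exact: HOM_graded (graded_hom_comp y_gr z_gr).
Qed.

End HomComposition.

Lemma HOM_pairing (G : grp) (A X M N : zmodType) (lM : A -> M -> M) (DM : G -> M -> Prop)
    (lN : A -> N -> N) (DN : G -> N -> Prop) (DX : G -> X -> Prop) (beta : X -> M -> N) :
  homog_decomposable DX ->
  (forall m, {morph beta^~ m : x y / x + y}) -> (forall x, {morph beta x : m n / m + n}) ->
  (forall x a m, beta x (lM a m) = lN a (beta x m)) ->
  (forall s t x m, DX s x -> DM t m -> DN (gmul t s) (beta x m)) ->
  forall x, HOM lM DM lN DN (beta x).
Proof.
move=> HDX betaDl betaDr beta_lin beta_deg x; have [s [Ds xE]] := HDX x.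
apply: (HOM_sum (s := s) (F := fun y => beta y.2)) => [y /Ds Dy|m].
  apply: (HOM_graded (sigma := y.1)); split; first exact/morphD_additive/betaDr.
  by split=> [|tau m Dm]; [apply: beta_lin | apply: beta_deg].
by rewrite xE (morphD_sum (betaDl m)).
Qed.

Section MoritaContext.
Variable G : grp.
Variables (A : zmodType) (mulA : A -> A -> A) (DA : G -> A -> Prop).
Variables (B : zmodType) (mulB : B -> B -> B) (DB : G -> B -> Prop).
Hypotheses (HA : graded_ring mulA DA) (HB : graded_ring mulB DB).
Variables (P : zmodType) (lP : A -> P -> P) (rP : P -> B -> P) (DP : G -> P -> Prop).
Variables (Q : zmodType) (lQ : B -> Q -> Q) (rQ : Q -> A -> Q) (DQ : G -> Q -> Prop).
Hypothesis HP : graded_bimod mulA DA mulB DB lP rP DP.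
Hypothesis HQ : graded_bimod mulB DB mulA DA lQ rQ DQ.
Variables (mu : P -> Q -> A) (nu : Q -> P -> B).
Hypothesis Hctx : graded_morita_context mulA DA mulB DB lP rP DP lQ rQ DQ mu nu.
Hypothesis Hsurj : surjective_traces mu nu.

Let HDB : homog_decomposable DB := grading_decomposable HB.1.
Let HDP : homog_decomposable DP := grading_decomposable HP.1.1.
Let HDQ : homog_decomposable DQ := grading_decomposable HQ.1.1.
Let mulAA : forall a b c, mulA a (mulA b c) = mulA (mulA a b) c := HA.2.1.
Let mulADr : forall a, {morph mulA a : b c / b + c} := HA.2.2.1.
Let mulADl : forall c, {morph mulA^~ c : a b / a + b} := fun c a b => HA.2.2.2.1 a b c.
Let mulBDl : forall c, {morph mulB^~ c : a b / a + b} := fun c a b => HB.2.2.2.1 a b c.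
Let lPDr : forall a, {morph lP a : p1 p2 / p1 + p2} := HP.1.2.1.
Let lPDl : forall p, {morph lP^~ p : a1 a2 / a1 + a2} := fun p a1 a2 => HP.1.2.2.1 a1 a2 p.
Let lPM : forall a b p, lP (mulA a b) p = lP a (lP b p) := HP.1.2.2.2.1.
Let DP_lP : forall s t a p, DA s a -> DP t p -> DP (gmul s t) (lP a p) := HP.1.2.2.2.2.
Let rPDl : forall b, {morph rP^~ b : p1 p2 / p1 + p2} := HP.2.1.2.1.
Let rPDr : forall p, {morph rP p : b1 b2 / b1 + b2} := fun p b1 b2 => HP.2.1.2.2.1 b1 b2 p.
Let rPM : forall a b p, rP p (mulB a b) = rP (rP p a) b := HP.2.1.2.2.2.1.
Let DP_rP : forall s t p b, DP s p -> DB t b -> DP (gmul s t) (rP p b) := HP.2.1.2.2.2.2.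
Let lP_rP : forall a p b, rP (lP a p) b = lP a (rP p b) := HP.2.2.1.
Let muDl : forall q, {morph mu^~ q : p1 p2 / p1 + p2} := fun q p1 p2 => Hctx.1.1 p1 p2 q.
Let muDr : forall p, {morph mu p : q1 q2 / q1 + q2} := Hctx.1.2.
Let mu_bal : forall p b q, mu (rP p b) q = mu p (lQ b q) := Hctx.2.1.
Let mu_lP : forall a p q, mu (lP a p) q = mulA a (mu p q) := Hctx.2.2.1.
Let Dmu : forall s t p q, DP s p -> DQ t q -> DA (gmul s t) (mu p q) := Hctx.2.2.2.2.1.
Let nuDr : forall q, {morph nu q : p1 p2 / p1 + p2} := Hctx.2.2.2.2.2.1.2.
Let nu_rP : forall q p b, nu q (rP p b) = mulB (nu q p) b := Hctx.2.2.2.2.2.2.2.2.1.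
Let rP_nu : forall p' q p, rP p' (nu q p) = lP (mu p' q) p := Hctx.2.2.2.2.2.2.2.2.2.2.1.

Lemma HOM_lP_at p : HOM mulA DA lP DP (lP^~ p).
Proof.
apply: (HOM_pairing (beta := fun p x => lP x p) HDP) => //.
by move=> s t p' x Dp Dx; apply: DP_lP.
Qed.

Lemma HOM_mu_at q : HOM lP DP mulA DA (mu^~ q).
Proof.
apply: (HOM_pairing (beta := fun q p => mu p q) HDQ muDr muDl).
  by move=> q' a p; apply: mu_lP.
by move=> s t q' p Dq Dp; apply: Dmu.
Qed.

Section Phi.
Variables (K : zmodType) (lK : A -> K -> K) (DK : G -> K -> Prop).
Hypothesis HK : graded_lmod mulA DA lK DK.
Variables (H : zmodType) (lH : B -> H -> H) (DH : G -> H -> Prop) (iota : H -> P -> K).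
Hypothesis iotaB : forall h1 h2 p, iota (h1 - h2) p = iota h1 p - iota h2 p.
Hypothesis iota_inj : forall h1 h2, (forall p, iota h1 p = iota h2 p) -> h1 = h2.
Hypothesis iota_SHOM : forall h, SHOM lP rP DP lK DK (iota h).
Hypothesis iota_onto :
  forall f, SHOM lP rP DP lK DK f -> exists h, forall p, iota h p = f p.
Hypothesis iota_lH : forall b h p, iota (lH b h) p = iota h (rP p b).
Hypothesis DH_iota : forall sigma h, DH sigma h <-> graded_hom lP DP lK DK sigma (iota h).
Variables (T1 : zmodType) (tens1 : P -> H -> T1) (lT1 : A -> T1 -> T1).
Variable DT1 : G -> T1 -> Prop.
Hypothesis Ht1 : is_tensor rP lH tens1.
Hypothesis lT1D : forall a, {morph lT1 a : t u / t + u}.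
Hypothesis lT1_tens : forall a p h, lT1 a (tens1 p h) = tens1 (lP a p) h.
Hypothesis HDT1 : is_grading DT1.
Hypothesis DT1_tens : forall s t p h, DP s p -> DH t h -> DT1 (gmul s t) (tens1 p h).

Let lKD : forall a, {morph lK a : x y / x + y} := HK.2.1.

Lemma iotaDl p : {morph iota^~ p : h1 h2 / h1 + h2}.
Proof. by apply: additive_morphD => h1 h2; apply: iotaB. Qed.

Lemma iotaDr h : {morph iota h : p1 p2 / p1 + p2}.
Proof. exact: (SHOM_morphD rPDl (iota_SHOM h)). Qed.

Lemma iota_lP h a p : iota h (lP a p) = lK a (iota h p).
Proof. exact: (SHOM_lin lKD lP_rP (iota_SHOM h)). Qed.

Lemma iota0 p : iota 0 p = 0.
Proof. exact: (morphD0 (iotaDl p)). Qed.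

Lemma lHDr b : {morph lH b : h1 h2 / h1 + h2}.
Proof. by move=> h1 h2; apply: iota_inj => p; rewrite iotaDl !iota_lH iotaDl. Qed.

Lemma lHDl h : {morph lH^~ h : b1 b2 / b1 + b2}.
Proof.
by move=> b1 b2; apply: iota_inj => p; rewrite iotaDl !iota_lH rPDr iotaDr.
Qed.

Lemma HOM_iota_lP h p : HOM mulA DA lK DK (fun x => iota h (lP x p)).
Proof.
have [l [Hl iotaE]] := iota_SHOM h.
apply: (HOM_sum (s := l) (F := fun y x => y.2 (lP x (rP p y.1)))) => [y /Hl|x].
  exact: HOM_comp (HOM_lP_at _).
by rewrite iotaE; apply: eq_bigr => y _; rewrite lP_rP.
Qed.

Lemma SHOM_iota_lP h p : SHOM mulA mulA DA lK DK (fun x => iota h (lP x p)).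
Proof.
have [l pE] := HP.2.2.2.1 p.
apply: (SHOM_sum (s := l) (F := fun y x => iota h (lP (mulA x y.1) y.2))) => [y _|x].
  by apply: (SHOM_of_HOM (b := y.1) (HOM_iota_lP h y.2)).
rewrite pE (morphD_sum (lPDr x)) (morphD_sum (iotaDr h)).
by apply: eq_bigr => y _; rewrite lPM.
Qed.

Lemma SHOM_comp_mu (g : A -> K) q :
  HOM mulA DA lK DK g -> SHOM lP rP DP lK DK (fun p => g (mu p q)).
Proof.
move=> g_hom; have [l qE] := HQ.2.2.2.1 q.
apply: (SHOM_sum (s := l) (F := fun y p => g (mu (rP p y.1) y.2))) => [y _|p].
  exact: (SHOM_of_HOM (HOM_comp (HOM_mu_at y.2) g_hom)).
rewrite qE (morphD_sum (muDr p)) (morphD_sum (HOM_morphD g_hom)).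
by apply: eq_bigr => y _; rewrite mu_bal.
Qed.

Lemma H_decomposable : homog_decomposable DH.
Proof.
move=> h.
have [l [Hl hE]] :
    fin_sum_of (fun y : G * H => DH y.1 y.2) (fun y p => iota y.2 p) (iota h).
  have [l [Hl iotaE]] :=
    SHOM_graded_decomp rPDl lP_rP HDB rPDr DP_rP (iota_SHOM h).
  apply: (fin_sum_of_sum _ iotaE) => y /Hl[y_gr /iota_onto[h' h'E]].
  apply: (fin_sum_of1 (y := (y.1, h'))) => //=.
  by apply/DH_iota; apply: eq_graded_hom y_gr => p; rewrite h'E.
exists l; split=> //; apply: iota_inj => p.
by rewrite hE (morphD_sum (iotaDl p)).
Qed.

Lemma lT1Dl t : {morph lT1^~ t : a1 a2 / a1 + a2}.
Proof.
move=> a1 a2; move: t; apply: (tensor_ext Ht1) => [t u|t u|p h] /=.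
- by rewrite !lT1D.
- by rewrite !lT1D addrACA.
- by rewrite !lT1_tens lPDl (tensDl Ht1).
Qed.

Lemma exists_phi : exists phi : T1 -> A -> K,
  (forall x, {morph phi^~ x : t u / t + u}) /\
  forall p h x, phi (tens1 p h) x = iota h (lP x p).
Proof.
apply: (tensor_lift_family Ht1 (beta := fun x p h => iota h (lP x p))) => x.
  by split=> [p1 p2 h|p h1 h2]; rewrite ?lPDr ?iotaDr ?iotaDl.
by move=> p b h; rewrite -lP_rP iota_lH.
Qed.

Section PhiMap.
Variable phi : T1 -> A -> K.
Hypothesis phiD : forall x, {morph phi^~ x : t u / t + u}.
Hypothesis phi_tens : forall p h x, phi (tens1 p h) x = iota h (lP x p).

Lemma phi_SHOM t : SHOM mulA mulA DA lK DK (phi t).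
Proof.
have [s tE] := tensor_span Ht1 t.
apply: (SHOM_sum (s := s) (F := fun y x => iota y.2 (lP x y.1))) => [y _|x].
  exact: SHOM_iota_lP.
by rewrite tE (morphD_sum (phiD x)); apply: eq_bigr => y _; rewrite phi_tens.
Qed.

Lemma phi_onto f : SHOM mulA mulA DA lK DK f -> exists t, forall x, phi t x = f x.
Proof.
move=> [l [Hl fE]]; apply: (fin_sum_of_image (R := fun _ => True) phiD).
apply: (fin_sum_of_sum _ fE) => y /Hl g_hom.
have [s aE] := Hsurj.1 y.1.
apply: (fin_sum_of_sum (s := s) (F := fun z x => y.2 (mulA x (mu z.1 z.2)))) => [z _|x].
  have [h hE] := iota_onto (SHOM_comp_mu z.2 g_hom).
  by apply: (fin_sum_of1 (y := tens1 z.1 h)) => // x; rewrite phi_tens hE mu_lP.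
by rewrite aE (morphD_sum (mulADr x)) (morphD_sum (HOM_morphD g_hom)).
Qed.

Lemma phi_lT1 a t x : phi (lT1 a t) x = phi t (mulA x a).
Proof.
move: t; apply: (tensor_ext Ht1 (f := fun t => phi (lT1 a t) x)) => [t u|t u|p h] /=.
- by rewrite lT1D phiD.
- exact: phiD.
- by rewrite lT1_tens !phi_tens lPM.
Qed.

Lemma phi_graded sigma t : DT1 sigma t -> graded_hom mulA DA lK DK sigma (phi t).
Proof.
move=> Dt; split; first exact/morphD_additive/(SHOM_morphD mulADl (phi_SHOM t)).
split; first by apply: (SHOM_lin lKD _ (phi_SHOM t)) => a m b; rewrite mulAA.
move=> tau x Dx.
apply: (tensor_graded_image Ht1 HDP H_decomposable HDT1 DT1_tens HK.1 (phiD x))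
  => // s u p h Dp Dh.
rewrite phi_tens gmulA; apply: ((DH_iota _ _).1 Dh).2.2.
exact: DP_lP.
Qed.

Lemma lT1_mu_factors p q : exists chi : T1 -> H,
  {morph chi : t u / t + u} /\
  (forall t, lT1 (mu p q) t = tens1 p (chi t)) /\
  (forall t p', iota (chi t) p' = phi t (mu p' q)).
Proof.
have [chi [chiD chi_tens]] : exists chi : T1 -> H, {morph chi : t u / t + u} /\
    forall p' h, chi (tens1 p' h) = lH (nu q p') h.
  apply: (tensor_univ Ht1) => [|p' b h].
    by split=> [p1 p2 h|p' h1 h2]; rewrite ?nuDr ?lHDl ?lHDr.
  by apply: iota_inj => p''; rewrite !iota_lH nu_rP rPM.
exists chi; split=> //; split=> t.
  move: t; apply: (tensor_ext Ht1) => [t u|t u|p' h] /=.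
  - by rewrite lT1D.
  - by rewrite chiD (tensDr Ht1).
  - by rewrite lT1_tens chi_tens -rP_nu (tens_bal Ht1).
move=> p'; move: t; apply: (tensor_ext Ht1 (f := fun t => iota (chi t) p')).
- by move=> t u; rewrite chiD iotaDl.
- exact: phiD.
- by move=> p'' h; rewrite chi_tens iota_lH phi_tens rP_nu.
Qed.

Lemma phi_torsion_kernel t : (forall x, phi t x = 0) -> forall a, lT1 a t = 0.
Proof.
move=> phi0 a; have [s ->] := Hsurj.1 a.
rewrite (morphD_sum (lT1Dl t)) big1 // => z _.
have [chi [chiD [lT1E iotaE]]] := lT1_mu_factors z.1 z.2.
rewrite lT1E; have -> : chi t = 0 by apply: iota_inj => p; rewrite iotaE phi0 iota0.
exact: (tens0r Ht1).
Qed.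

End PhiMap.

Lemma phi_spec : exists phi : T1 -> A -> K,
  (forall t u x, phi (t - u) x = phi t x - phi u x) /\
  (forall p h x, phi (tens1 p h) x = iota h (lP x p) /\
                 phi (tens1 p h) x = lK x (iota h p)) /\
  (forall t, SHOM mulA mulA DA lK DK (phi t)) /\
  (forall f, SHOM mulA mulA DA lK DK f -> exists t, forall x, phi t x = f x) /\
  (forall a t x, phi (lT1 a t) x = phi t (mulA x a)) /\
  (forall sigma t, DT1 sigma t -> graded_hom mulA DA lK DK sigma (phi t)) /\
  (forall t, (forall x, phi t x = 0) -> forall a, lT1 a t = 0).
Proof.
have [phi [phiD phi_tens]] := exists_phi.
exists phi; split; first by move=> t u x; apply: (morphD_additive (phiD x)).
split; first by move=> p h x; rewrite phi_tens iota_lP.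
split; first exact: phi_SHOM.
split; first exact: phi_onto.
split; first exact: phi_lT1.
by split; [apply: phi_graded | apply: phi_torsion_kernel].
Qed.

End Phi.

Section Gamma.
Variables (L : zmodType) (lL : B -> L -> L) (DL : G -> L -> Prop).
Hypothesis HL : graded_lmod mulB DB lL DL.
Variables (T2 : zmodType) (tens2 : P -> L -> T2) (lT2 : A -> T2 -> T2).
Variable DT2 : G -> T2 -> Prop.
Hypothesis Ht2 : is_tensor rP lL tens2.
Hypothesis lT2D : forall a, {morph lT2 a : t u / t + u}.
Hypothesis lT2_tens : forall a p l, lT2 a (tens2 p l) = tens2 (lP a p) l.
Hypothesis HDT2 : is_grading DT2.
Hypothesis DT2_tens : forall s t p l, DP s p -> DL t l -> DT2 (gmul s t) (tens2 p l).
Variables (T3 : zmodType) (tens3 : B -> L -> T3) (lT3 : B -> T3 -> T3).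
Variable DT3 : G -> T3 -> Prop.
Hypothesis Ht3 : is_tensor mulB lL tens3.
Hypothesis lT3D : forall b, {morph lT3 b : t u / t + u}.
Hypothesis lT3_tens : forall b b' l, lT3 b (tens3 b' l) = tens3 (mulB b b') l.
Hypothesis HDT3 : is_grading DT3.
Hypothesis DT3_tens : forall s t b l, DB s b -> DL t l -> DT3 (gmul s t) (tens3 b l).

Let HDL : homog_decomposable DL := grading_decomposable HL.1.

Lemma HOM_tens2_at l : HOM lP DP lT2 DT2 (tens2^~ l).
Proof.
apply: (HOM_pairing (beta := fun m p => tens2 p m) HDL (tensDr Ht2) (tensDl Ht2)).
  by move=> m a p; rewrite lT2_tens.
by move=> s t m p Dm Dp; apply: DT2_tens.
Qed.

Lemma lT3Dl t : {morph lT3^~ t : b1 b2 / b1 + b2}.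
Proof.
move=> b1 b2; move: t; apply: (tensor_ext Ht3) => [t u|t u|b l] /=.
- by rewrite !lT3D.
- by rewrite !lT3D addrACA.
- by rewrite !lT3_tens mulBDl (tensDl Ht3).
Qed.

Lemma exists_gamma : exists gamma : T3 -> P -> T2,
  (forall p, {morph gamma^~ p : t u / t + u}) /\
  forall b l p, gamma (tens3 b l) p = tens2 (rP p b) l.
Proof.
apply: (tensor_lift_family Ht3 (beta := fun p b l => tens2 (rP p b) l)) => p.
  by split=> [b1 b2 l|b l1 l2]; rewrite ?rPDr ?(tensDl Ht2) ?(tensDr Ht2).
by move=> b b' l; rewrite rPM (tens_bal Ht2).
Qed.

Section GammaMap.
Variable gamma : T3 -> P -> T2.
Hypothesis gammaD : forall p, {morph gamma^~ p : t u / t + u}.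
Hypothesis gamma_tens : forall b l p, gamma (tens3 b l) p = tens2 (rP p b) l.

Lemma gamma_SHOM t : SHOM lP rP DP lT2 DT2 (gamma t).
Proof.
have [s tE] := tensor_span Ht3 t.
apply: (SHOM_sum (s := s) (F := fun y p => tens2 (rP p y.1) y.2)) => [y _|p].
  exact: (SHOM_of_HOM (HOM_tens2_at y.2)).
by rewrite tE (morphD_sum (gammaD p)); apply: eq_bigr => y _; rewrite gamma_tens.
Qed.

Lemma gamma_onto f : SHOM lP rP DP lT2 DT2 f -> exists t, forall p, gamma t p = f p.
Proof.
move=> [l [Hl fE]]; apply: (fin_sum_of_image (R := fun _ => True) gammaD).
apply: (fin_sum_of_sum _ fE) => y /Hl g_hom.
have [s bE] := Hsurj.2 y.1.
apply: (fin_sum_of_sum (s := s) (F := fun z p => lT2 (mu p z.1) (y.2 z.2))) => [z _|p].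
  have [s' gE] := tensor_span Ht2 (y.2 z.2).
  apply: (fin_sum_of_sum (s := s') (F := fun w p => tens2 (rP p (nu z.1 w.1)) w.2)).
    by move=> w _; apply: (fin_sum_of1 (y := tens3 (nu z.1 w.1) w.2)).
  move=> p; rewrite gE (morphD_sum (lT2D _)); apply: eq_bigr => w _.
  by rewrite lT2_tens rP_nu.
rewrite bE (morphD_sum (rPDr p)) (morphD_sum (HOM_morphD g_hom)).
by apply: eq_bigr => z _; rewrite rP_nu (HOM_lin lT2D g_hom).
Qed.

Lemma gamma_lT3 b t p : gamma (lT3 b t) p = gamma t (rP p b).
Proof.
move: t; apply: (tensor_ext Ht3 (f := fun t => gamma (lT3 b t) p)) => [t u|t u|b' l] /=.
- by rewrite lT3D gammaD.
- exact: gammaD.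
- by rewrite lT3_tens !gamma_tens rPM.
Qed.

Lemma gamma_graded sigma t : DT3 sigma t -> graded_hom lP DP lT2 DT2 sigma (gamma t).
Proof.
move=> Dt; split; first exact/morphD_additive/(SHOM_morphD rPDl (gamma_SHOM t)).
split; first exact: (SHOM_lin lT2D lP_rP (gamma_SHOM t)).
move=> tau p Dp.
apply: (tensor_graded_image Ht3 HDB HDL HDT3 DT3_tens HDT2 (gammaD p))
  => // s u b l Db Dl.
by rewrite gamma_tens gmulA; apply: DT2_tens => //; apply: DP_rP.
Qed.

Lemma lT3_nu_factors q p : exists theta : T2 -> T3,
  {morph theta : t u / t + u} /\ forall t, lT3 (nu q p) t = theta (gamma t p).
Proof.
have [theta [thetaD theta_tens]] : exists theta : T2 -> T3,
    {morph theta : t u / t + u} /\ forall p' l, theta (tens2 p' l) = tens3 (nu q p') l.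
  apply: (tensor_univ Ht2) => [|p' b l].
    by split=> [p1 p2 l|p' l1 l2]; rewrite ?nuDr ?(tensDl Ht3) ?(tensDr Ht3).
  by rewrite nu_rP (tens_bal Ht3).
exists theta; split=> // t; move: t; apply: (tensor_ext Ht3) => [t u|t u|b l] /=.
- by rewrite lT3D.
- by rewrite gammaD thetaD.
- by rewrite lT3_tens gamma_tens theta_tens nu_rP.
Qed.

Lemma gamma_torsion_kernel t : (forall p, gamma t p = 0) -> forall b, lT3 b t = 0.
Proof.
move=> gamma0 b; have [s ->] := Hsurj.2 b.
rewrite (morphD_sum (lT3Dl t)) big1 // => z _.
have [theta [thetaD ->]] := lT3_nu_factors z.1 z.2.
by rewrite gamma0 (morphD0 thetaD).
Qed.

End GammaMap.

Lemma gamma_spec : exists gamma : T3 -> P -> T2,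
  (forall t u p, gamma (t - u) p = gamma t p - gamma u p) /\
  (forall b l p, gamma (tens3 b l) p = tens2 (rP p b) l) /\
  (forall t, SHOM lP rP DP lT2 DT2 (gamma t)) /\
  (forall f, SHOM lP rP DP lT2 DT2 f -> exists t, forall p, gamma t p = f p) /\
  (forall b t p, gamma (lT3 b t) p = gamma t (rP p b)) /\
  (forall sigma t, DT3 sigma t -> graded_hom lP DP lT2 DT2 sigma (gamma t)) /\
  (forall t, (forall p, gamma t p = 0) -> forall b, lT3 b t = 0).
Proof.
have [gamma [gammaD gamma_tens]] := exists_gamma.
exists gamma; split; first by move=> t u p; apply: (morphD_additive (gammaD p)).
split; first exact: gamma_tens.
split; first exact: gamma_SHOM.
split; first exact: gamma_onto.
split; first exact: gamma_lT3.
by split; [apply: gamma_graded | apply: gamma_torsion_kernel].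
Qed.

End Gamma.

End MoritaContext.

Theorem proposition5p3
  (G : grp)
  (* idempotent graded rings A, B *)
  (A : zmodType) (mulA : A -> A -> A) (DA : G -> A -> Prop)
  (B : zmodType) (mulB : B -> B -> B) (DB : G -> B -> Prop)
  (HA : graded_ring mulA DA) (HAi : idempotent_ring mulA)
  (HB : graded_ring mulB DB) (HBi : idempotent_ring mulB)
  (* graded bimodules _A P _B and _B Q _A, unital on both sides *)
  (P : zmodType) (lP : A -> P -> P) (rP : P -> B -> P) (DP : G -> P -> Prop)
  (Q : zmodType) (lQ : B -> Q -> Q) (rQ : Q -> A -> Q) (DQ : G -> Q -> Prop)
  (HP : graded_bimod mulA DA mulB DB lP rP DP)
  (HQ : graded_bimod mulB DB mulA DA lQ rQ DQ)
  (* graded Morita context with surjective trace maps *)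
  (mu : P -> Q -> A) (nu : Q -> P -> B)
  (Hctx : graded_morita_context mulA DA mulB DB lP rP DP lQ rQ DQ mu nu)
  (Hsurj : surjective_traces mu nu)
  (* unital torsion-free graded modules _A K and _B L *)
  (K : zmodType) (lK : A -> K -> K) (DK : G -> K -> Prop)
  (HK : graded_lmod mulA DA lK DK) (HKu : unital_lmod lK) (HKt : torsion_free lK)
  (L : zmodType) (lL : B -> L -> L) (DL : G -> L -> Prop)
  (HL : graded_lmod mulB DB lL DL) (HLu : unital_lmod lL) (HLt : torsion_free lL)
  (* H : a copy of the graded left B-module B.HOM_A(P,K), embedded by iota *)
  (H : zmodType) (lH : B -> H -> H) (DH : G -> H -> Prop) (iota : H -> P -> K)
  (Hiota_add : forall h1 h2 p, iota (h1 - h2) p = iota h1 p - iota h2 p)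
  (Hiota_inj : forall h1 h2, (forall p, iota h1 p = iota h2 p) -> h1 = h2)
  (Hiota_in : forall h, SHOM lP rP DP lK DK (iota h))
  (Hiota_onto : forall f, SHOM lP rP DP lK DK f -> exists h, forall p, iota h p = f p)
  (Hiota_lin : forall b h p, iota (lH b h) p = iota h (rP p b))
  (Hiota_deg : forall sigma h, DH sigma h <-> graded_hom lP DP lK DK sigma (iota h))
  (* T1 = P (x)_B H, with its graded left A-module structure *)
  (T1 : zmodType) (tens1 : P -> H -> T1) (Ht1 : is_tensor rP lH tens1)
  (lT1 : A -> T1 -> T1) (DT1 : G -> T1 -> Prop)
  (HlT1_add : forall a t u, lT1 a (t + u) = lT1 a t + lT1 a u)
  (HlT1 : forall a p h, lT1 a (tens1 p h) = tens1 (lP a p) h)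
  (HDT1 : is_grading DT1)
  (HDT1t : forall s t p h, DP s p -> DH t h -> DT1 (gmul s t) (tens1 p h))
  (* T2 = P (x)_B L, with its graded left A-module structure *)
  (T2 : zmodType) (tens2 : P -> L -> T2) (Ht2 : is_tensor rP lL tens2)
  (lT2 : A -> T2 -> T2) (DT2 : G -> T2 -> Prop)
  (HlT2_add : forall a t u, lT2 a (t + u) = lT2 a t + lT2 a u)
  (HlT2 : forall a p l, lT2 a (tens2 p l) = tens2 (lP a p) l)
  (HDT2 : is_grading DT2)
  (HDT2t : forall s t p l, DP s p -> DL t l -> DT2 (gmul s t) (tens2 p l))
  (* T3 = B (x)_B L, with its graded left B-module structure *)
  (T3 : zmodType) (tens3 : B -> L -> T3) (Ht3 : is_tensor mulB lL tens3)
  (lT3 : B -> T3 -> T3) (DT3 : G -> T3 -> Prop)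
  (HlT3_add : forall b t u, lT3 b (t + u) = lT3 b t + lT3 b u)
  (HlT3 : forall b b' l, lT3 b (tens3 b' l) = tens3 (mulB b b') l)
  (HDT3 : is_grading DT3)
  (HDT3t : forall s t b l, DB s b -> DL t l -> DT3 (gmul s t) (tens3 b l)) :
  (* (1) phi : P (x)_B B.HOM_A(P,K) -> A.HOM_A(A,K) *)
  (exists phi : T1 -> A -> K,
     (forall t u x, phi (t - u) x = phi t x - phi u x) /\
     (forall p h x, phi (tens1 p h) x = iota h (lP x p) /\
                    phi (tens1 p h) x = lK x (iota h p)) /\
     (forall t, SHOM mulA mulA DA lK DK (phi t)) /\
     (forall f, SHOM mulA mulA DA lK DK f -> exists t, forall x, phi t x = f x) /\
     (forall a t x, phi (lT1 a t) x = phi t (mulA x a)) /\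
     (forall sigma t, DT1 sigma t -> graded_hom mulA DA lK DK sigma (phi t)) /\
     (forall t, (forall x, phi t x = 0) -> forall a, lT1 a t = 0)) /\
  (* (2) gamma : B (x)_B L -> B.HOM_A(P, P (x)_B L) *)
  (exists gamma : T3 -> P -> T2,
     (forall t u p, gamma (t - u) p = gamma t p - gamma u p) /\
     (forall b l p, gamma (tens3 b l) p = tens2 (rP p b) l) /\
     (forall t, SHOM lP rP DP lT2 DT2 (gamma t)) /\
     (forall f, SHOM lP rP DP lT2 DT2 f -> exists t, forall p, gamma t p = f p) /\
     (forall b t p, gamma (lT3 b t) p = gamma t (rP p b)) /\
     (forall sigma t, DT3 sigma t -> graded_hom lP DP lT2 DT2 sigma (gamma t)) /\
     (forall t, (forall p, gamma t p = 0) -> forall b, lT3 b t = 0)).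
Proof.
split; [apply: phi_spec | apply: gamma_spec]; eassumption.
Qed.
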